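(* Let $\mathcal{P}_1,\dots,\mathcal{P}_k$ be finite posets and $\mathcal{P}=\times_j\mathcal{P}_j$. The maximum (finite) ND rank is always a typical ND rank.
   Context: For a finite poset $\mathcal{Q}$, the order cone $\mathcal{C}(\mathcal{Q})$ is the set of $\mathbf{f}\in\mathbb{R}^{\mathcal{Q}}$ with $f_x\ge0$ and $f_x\le f_y$ whenever $x\preceq y$. $\mathcal{N}_{\le r}$ is the set of tensors in $\mathbb{R}^{\mathcal{P}}=\otimes_j\mathbb{R}^{\mathcal{P}_j}$ of the form $\sum_{i=1}^r\otimes_{j=1}^k\mathbf{v}^{(ij)}$ with $\mathbf{v}^{(ij)}\in\mathcal{C}(\mathcal{P}_j)$, and $\mathcal{N}_r=\mathcal{N}_{\le r}\setminus\mathcal{N}_{\le r-1}$ is the set of tensors of ND rank exactly $r$. The maximum ND rank is $\sup\{r<\infty:\mathcal{N}_r\neq\emptyset\}$. A number $r$ is a typical ND rank if $\mathcal{N}_r$ has non-empty interior in $\mathbb{R}^{\mathcal{P}}$. *)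

From mathcomp Require Import all_boot all_order all_algebra.
From mathcomp Require Import reals.
Set Implicit Arguments. Unset Strict Implicit. Unset Printing Implicit Defensive.
Import Order.TTheory GRing.Theory Num.Theory.
Local Open Scope ring_scope.

Definition is_poset (T : finType) (le : rel T) : Prop :=
  [/\ reflexive le, antisymmetric le & transitive le].

Section ND.
Variable R : realType.

Definition order_cone (T : finType) (le : rel T) (f : T -> R) : Prop :=
  (forall x, 0 <= f x) /\ (forall x y, le x y -> f x <= f y).

Variables (k : nat) (T : 'I_k -> finType) (le : forall j, rel (T j)).

Definition prodP := {dffun forall j : 'I_k, T j}.
Definition tensor := prodP -> R.

Definition Nle (r : nat) (f : tensor) : Prop :=
  exists v : 'I_r -> forall j : 'I_k, T j -> R,
    (forall (i : 'I_r) (j : 'I_k), order_cone (@le j) (v i j)) /\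
    (forall x : prodP, f x = \sum_(i < r) \prod_(j < k) v i j (x j)).

Definition Nrank (r : nat) (f : tensor) : Prop :=
  match r with
  | 0 => Nle 0 f
  | r'.+1 => Nle r'.+1 f /\ ~ Nle r' f
  end.

(* A set S of tensors in R^P (finite-dimensional, standard topology) has
   non-empty interior: it contains a (sup-norm) open ball. *)
Definition has_nonempty_interior (S : tensor -> Prop) : Prop :=
  exists f0 : tensor, exists eps : R, 0 < eps /\
    forall f : tensor, (forall x, `|f x - f0 x| < eps) -> S f.

Definition typical_ND_rank (r : nat) : Prop := has_nonempty_interior (Nrank r).

Definition max_ND_rank (r : nat) : Prop :=
  (exists f, Nrank r f) /\ (forall r', (exists f, Nrank r' f) -> (r' <= r)%N).
End ND.

(* Let K be the cone of tensors of finite ND rank, the union of the N_{<=n}.  It is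
   closed under sums and nonnegative scaling, and if r is the maximum ND rank then
   K = N_{<=r}.  K has nonempty interior: by inclusion-exclusion the indicator of a
   point z of P is a signed sum, over b in {0,1}^k, of products of indicators of the
   up-sets {y >= z_j} and {y > z_j}; hence every tensor within sup-distance 1 of the
   sum E of all these pure tensors is a nonnegative combination of them.  N_{<=r-1} is
   closed: a decomposition of a bounded tensor can be rescaled to have bounded
   factors, and a continuous defect functional on a compact box of factors attains a
   positive minimum away from N_{<=r-1}.  So if g has ND rank exactly r and t > 0 is
   small, every tensor close to g + tE lies in g + tK, inside N_{<=r}, but outside
   N_{<=r-1}.  For k = 0 every pure tensor is the constant 1, N_{<=n} = {n}, and there
   is no maximum ND rank. *)

From mathcomp Require Import all_boot all_order all_algebra.
From mathcomp Require Import reals.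
From mathcomp Require Import all_classical all_reals all_analysis.
From mathcomp Require Import ring lra.
Import Order.TTheory GRing.Theory Num.Theory numFieldNormedType.Exports.
Local Open Scope classical_set_scope.
Local Open Scope ring_scope.

Section ND_cone.
Variables (R : realType) (k : nat) (T : 'I_k -> finType) (le : forall j, rel (T j)).
Set Implicit Arguments. Unset Strict Implicit.

(* For k = 0 every pure tensor is the constant 1, so [Nle n] only contains the
   constant n; see [Nle_order0]. *)
Hypothesis k_gt0 : (0 < k)%N.

Local Notation tensor := (tensor R T).
Local Notation prodP := (prodP T).
Local Notation Nle := (@Nle R k T le).

Let j0 : 'I_k := Ordinal k_gt0.

Lemma order_cone0 j : order_cone (le j) (fun=> 0 : R).
Proof. by split. Qed.

Lemma Nle_zero n : Nle n (fun=> 0).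
Proof.
exists (fun _ _ _ => 0); split=> [i j | x]; first exact: order_cone0.
by rewrite big1 // => i _; rewrite (bigD1 j0) //= mul0r.
Qed.

Lemma Nle_add a b f g : Nle a f -> Nle b g -> Nle (a + b) (fun x => f x + g x).
Proof.
move=> [v [v_cone f_def]] [w [w_cone g_def]].
exists (fun i => match fintype.split i with inl i1 => v i1 | inr i2 => w i2 end); split.
  by move=> i j; case: (fintype.split i).
move=> x; rewrite big_split_ord f_def g_def.
by congr (_ + _); apply: eq_bigr => i _; rewrite ?(unsplitK (inl i), unsplitK (inr i)).
Qed.

Lemma Nle_widen a b f : (a <= b)%N -> Nle a f -> Nle b f.
Proof.
move=> le_ab /Nle_add /(_ (Nle_zero (b - a))); rewrite subnKC //.
by under eq_fun do rewrite addr0.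
Qed.

Lemma Nle_scale n c f : 0 <= c -> Nle n f -> Nle n (fun x => c * f x).
Proof.
move=> c_ge0 [v [v_cone f_def]].
exists (fun i j y => (if j == j0 then c else 1) * v i j y); split.
  move=> i j; have [v_ge0 v_mono] := v_cone i j.
  have cj_ge0 : 0 <= (if j == j0 then c else 1) by case: ifP.
  by split=> [y | y y' yy']; [apply: mulr_ge0 | apply: ler_wpM2l; last exact: v_mono].
move=> x; rewrite f_def mulr_sumr; apply: eq_bigr => i _.
by rewrite big_split /= -big_mkcond /= big_pred1_eq.
Qed.

Lemma Nle_pure (u : forall j, T j -> R) : (forall j, order_cone (le j) (u j)) ->
  Nle 1 (fun x => \prod_j u j (x j)).
Proof. by move=> u_cone; exists (fun=> u); split=> // x; rewrite big_ord1. Qed.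

Definition ND_cone (f : tensor) : Prop := exists n, Nle n f.

Lemma ND_cone_sum (I : Type) (s : seq I) (F : I -> tensor) :
  (forall i, ND_cone (F i)) -> ND_cone (fun x => \sum_(i <- s) F i x).
Proof.
move=> F_cone; elim: s => [|i s [n IH]].
  by exists 0%N; under eq_fun do rewrite big_nil; exact: Nle_zero.
have [m Fi] := F_cone i; exists (m + n)%N.
by under eq_fun do rewrite big_cons; exact: Nle_add.
Qed.

Lemma ND_cone_max_rank r f : max_ND_rank R le r -> ND_cone f -> Nle r f.
Proof.
move=> [_ rank_le_r] [n]; elim: n => [|n IH] f_n; first exact: (Nle_widen _ f_n).
have [/IH //|not_f_n] := pselect (Nle n f).
by apply: (Nle_widen _ f_n); apply: rank_le_r; exists f.
Qed.

(* Divide every factor but the [j0]-th by its maximum and multiply the [j0]-th by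
   the product of these maxima. *)
Lemma pure_tensor_balance (x0 : prodP) (v : forall j, T j -> R) :
    (forall j, order_cone (le j) (v j)) ->
  exists u : forall j, T j -> R,
    [/\ forall j, order_cone (le j) (u j),
        forall x : prodP, \prod_j u j (x j) = \prod_j v j (x j) &
        forall j y, exists x : prodP, u j y <= Num.max 1 (\prod_j v j (x j))].
Proof.
move=> v_cone; pose ys j := [arg max_(y > x0 j) v j y]%O.
have ys_max j y : v j y <= v j (ys j) by rewrite /ys; case: arg_maxP => // y' _; apply.
pose a j := v j (ys j); pose xs : prodP := finfun ys.
have a_ge0 j : 0 <= a j by case: (v_cone j) => ->.
have [/eqP/prodf_eq0[j _ /eqP aj0] | a_neq0] := eqVneq (\prod_j a j) 0.
  have vj0 y : v j y = 0.
    by apply/le_anti; case: (v_cone j) => -> _; rewrite andbT -aj0 ys_max.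
  exists (fun _ _ => 0); split=> [i | x | i y]; first exact: order_cone0.
    by rewrite [RHS](bigD1 j) //= vj0 mul0r (bigD1 j0) //= mul0r.
  by exists x0; rewrite le_max ler01.
have a_gt0 j : 0 < a j by rewrite lt0r a_ge0 andbT; move/prodf_neq0: a_neq0; apply.
pose lam j := if j == j0 then \prod_(j' | j' != j0) a j' else (a j)^-1.
have lam_ge0 j : 0 <= lam j by rewrite /lam; case: ifP => _; rewrite ?invr_ge0 ?prodr_ge0.
have prod_lam : \prod_j lam j = 1.
  rewrite (bigD1 j0) //= {1}/lam eqxx.
  under [X in _ * X]eq_bigr => j /negbTE j_neq0 do rewrite /lam j_neq0.
  by rewrite prodfV divff //; apply/prodf_neq0 => j _; rewrite gt_eqF.
exists (fun j y => v j y * lam j); split=> [j | x | j y].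
- have [v_ge0 v_mono] := v_cone j.
  by split=> [y | y y' yy']; [rewrite mulr_ge0 | rewrite ler_wpM2r ?v_mono].
- by rewrite big_split /= prod_lam mulr1.
exists xs; rewrite le_max /lam; case: ifP => [/eqP j_eq | _]; last first.
  by rewrite ler_pdivrMr // mul1r ys_max.
move: y; rewrite j_eq => y; apply/orP; right; under [leRHS]eq_bigr do rewrite ffunE.
by rewrite [leRHS](bigD1 j0) //= ler_wpM2r ?prodr_ge0.
Qed.

Lemma Nle_bounded (x0 : prodP) m g M : 1 <= M -> (forall x, g x <= M) -> Nle m g ->
  exists w : 'I_m -> forall j, T j -> R,
    [/\ forall i j, order_cone (le j) (w i j), forall i j y, w i j y <= M &
        forall x, g x = \sum_i \prod_j w i j (x j)].
Proof.
move=> M_ge1 g_le [v [v_cone g_def]].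
have /choice[u u_spec] := fun i => pure_tensor_balance x0 (v_cone i).
exists u; split=> [i j | i j y | x]; first by case: (u_spec i).
- have [_ _ /(_ j y)[x u_le]] := u_spec i.
  apply: le_trans u_le _; rewrite ge_max M_ge1; apply: le_trans (g_le x).
  rewrite g_def (bigD1 i) //= lerDl; apply: sumr_ge0 => i' _.
  by apply: prodr_ge0 => j' _; case: (v_cone i' j') => ->.
- by rewrite g_def; apply: eq_bigr => i _; have [_ -> _] := u_spec i.
Qed.

Section Closedness.
Variable m : nat.

Definition coef_index := ('I_m * {j : 'I_k & T j})%type.
Local Notation params := 'rV[R]_#|{: coef_index}|.

Definition coef (p : params) i j (y : T j) : R :=
  p ord0 (enum_rank (i, Tagged (fun j => T j : Type) y)).
Arguments coef p i j y : clear implicits.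

Definition params_tensor (p : params) : tensor :=
  fun x => \sum_i \prod_j coef p i j (x j).

(* [|d| - d] vanishes iff [d >= 0]: a continuous penalty for non-monotone factors. *)
Definition slack (p : params) i j (y y' : T j) : R :=
  `|coef p i j y' - coef p i j y| - (coef p i j y' - coef p i j y).
Arguments slack p i j y y' : clear implicits.

Definition mono_defect (p : params) : R :=
  \sum_i \sum_j \sum_(y : T j) \sum_(y' : T j | le j y y') slack p i j y y'.

Definition defect (f : tensor) (p : params) : R :=
  \sum_x `|params_tensor p x - f x| + mono_defect p.

Lemma defect_continuous f : continuous (defect f).
Proof.
have sumC (I : Type) (s : seq I) (P : pred I) (F : I -> params -> R) :
    (forall i, continuous (F i)) -> continuous (fun p => \sum_(i <- s | P i) F i p).
  by move=> F_cont; apply: (continuous_big add_continuous) => i _.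
have prodC (I : Type) (s : seq I) (P : pred I) (F : I -> params -> R) :
    (forall i, continuous (F i)) -> continuous (fun p => \prod_(i <- s | P i) F i p).
  by move=> F_cont; apply: (continuous_big mul_continuous) => i _.
have coefC i j y : continuous (fun p => coef p i j y) by exact: coord_continuous.
have normC (F : params -> R) : continuous F -> continuous (fun p => `|F p|).
  by move=> F_cont p; exact: cvg_norm (F_cont p).
have addC (F G : params -> R) :
    continuous F -> continuous G -> continuous (fun p => F p + G p).
  by move=> F_cont G_cont p; exact: (continuousD (F_cont p) (G_cont p)).
have subC (F G : params -> R) :
    continuous F -> continuous G -> continuous (fun p => F p - G p).
  by move=> F_cont G_cont p; exact: (continuousB (F_cont p) (G_cont p)).
apply: (addC); apply: (sumC) => x.
  apply: (normC); apply: (subC); last exact: cst_continuous.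
  by apply: (sumC) => i; apply: (prodC).
apply: (sumC) => j; apply: (sumC) => y; apply: (sumC) => y'.
by apply: (subC); [apply: (normC)|]; apply: (subC).
Qed.

Lemma slack_ge0 (p : params) i j y y' : 0 <= slack p i j y y'.
Proof. by rewrite subr_ge0 ler_norm. Qed.

Lemma slack_eq0 (p : params) i j y y' :
  slack p i j y y' = 0 -> coef p i j y <= coef p i j y'.
Proof. by move/eqP; rewrite subr_eq0 => /eqP/normr_idP; rewrite subr_ge0. Qed.

Lemma mono_defect_ge0 (p : params) : 0 <= mono_defect p.
Proof. by do 4!apply: sumr_ge0 => ? _; exact: slack_ge0. Qed.

Lemma defect_ge0 f (p : params) : 0 <= defect f p.
Proof. by rewrite addr_ge0 ?mono_defect_ge0 ?sumr_ge0. Qed.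

Lemma mono_defect_eq0 (p : params) : mono_defect p = 0 ->
  forall i j y y', le j y y' -> coef p i j y <= coef p i j y'.
Proof.
have s3_ge0 i j (y : T j) : 0 <= \sum_(y' | le j y y') slack p i j y y'.
  by apply: sumr_ge0 => y' _; exact: slack_ge0.
have s2_ge0 i j : 0 <= \sum_(y : T j) \sum_(y' | le j y y') slack p i j y y'.
  by apply: sumr_ge0 => y _; exact: s3_ge0.
move=> defect0 i j y y' yy'; apply: slack_eq0.
have /(_ i isT) := psumr_eq0P (fun i _ => sumr_ge0 _ (fun j _ => s2_ge0 i j)) defect0.
move=> /(psumr_eq0P (fun j _ => s2_ge0 i j)) /(_ j isT).
move=> /(psumr_eq0P (fun y _ => s3_ge0 i j y)) /(_ y isT).
by move=> /(psumr_eq0P (fun y' _ => @slack_ge0 p i j y y')) /(_ y' yy').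
Qed.

Lemma Nle_of_defect_eq0 f (p : params) :
  (forall c, 0 <= p ord0 c) -> defect f p = 0 -> Nle m f.
Proof.
move=> p_ge0 /eqP; rewrite paddr_eq0 ?mono_defect_ge0 ?sumr_ge0 //.
move=> /andP[/eqP fit0 /eqP mono0]; exists (fun i j y => coef p i j y); split=> [i j | x].
  by split=> [y | y y']; [exact: p_ge0 | exact: mono_defect_eq0].
have /(_ x isT)/eqP := psumr_eq0P (fun x _ => normr_ge0 _) fit0.
by rewrite normr_eq0 subr_eq0 => /eqP <-.
Qed.

Definition params_of (w : 'I_m -> forall j, T j -> R) : params :=
  \row_c let: (i, s) := enum_val c in w i (tag s) (tagged s).

Lemma coef_params_of w i j y : coef (params_of w) i j y = w i j y.
Proof. by rewrite /coef mxE enum_rankK. Qed.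

Definition box (M : R) : set params := [set p | forall c, `[0, M]%classic (p ord0 c)].

Lemma defect_min_gt0 f M : 0 <= M -> ~ Nle m f ->
  exists2 d, 0 < d & forall p, box M p -> d <= defect f p.
Proof.
move=> M_ge0 not_f.
have box_compact : compact (box M) := rV_compact (fun=> @segment_compact _ 0 M).
have box_neq0 : box M !=set0 by exists 0 => c; rewrite /= mxE in_itv /= lexx M_ge0.
have [p0 /set_mem p0_box p0_min] :=
  EVT_min_rV box_neq0 box_compact (continuous_subspaceT (@defect_continuous f)).
exists (defect f p0) => [|p /mem_set]; last exact: p0_min.
rewrite lt0r defect_ge0 andbT; apply/eqP => defect0.
apply: not_f (Nle_of_defect_eq0 _ defect0) => c.
by have := p0_box c; rewrite /= in_itv /= => /andP[].
Qed.

Lemma Nle_bounded_defect (x0 : prodP) f g M : 1 <= M -> (forall x, g x <= M) ->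
  Nle m g -> exists2 p, box M p & defect f p = \sum_x `|g x - f x|.
Proof.
move=> M_ge1 g_le /(Nle_bounded x0 M_ge1 g_le)[w [w_cone w_le g_def]].
exists (params_of w).
  move=> c; rewrite /= mxE; case: (enum_val c) => i [j y] /=.
  by rewrite in_itv /= w_le andbT; case: (w_cone i j) => ->.
rewrite /defect [mono_defect _]big1 ?addr0 => [|i _].
  apply: eq_bigr => x _; rewrite g_def /params_tensor.
  by under eq_bigr do under eq_bigr do rewrite coef_params_of.
apply: big1 => j _; apply: big1 => y _; apply: big1 => y' yy'.
have [_ /(_ _ _ yy')] := w_cone i j.
rewrite /slack !coef_params_of -subr_ge0 => /ger0_norm ->.
by rewrite subrr.
Qed.

Lemma Nle_closed f : ~ Nle m f ->
  exists2 eps, 0 < eps & forall g, (forall x, `|g x - f x| < eps) -> ~ Nle m g.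
Proof.
move=> not_f; have [x0 _ | prodP0] := pickP (@predT prodP); last first.
  case: not_f; have -> : f = fun=> 0 by apply: funext => x; have := prodP0 x.
  exact: Nle_zero.
pose M := \sum_x `|f x| + 1.
have M_ge1 : 1 <= M by rewrite lerDr sumr_ge0.
have f_le x : `|f x| <= M - 1 by rewrite addrK (bigD1 x) //= lerDl sumr_ge0.
have [d d_gt0 d_min] := defect_min_gt0 (le_trans ler01 M_ge1) not_f.
pose N : R := #|{: prodP}|%:R.
have N_ge0 : 0 <= N := ler0n _ _.
exists (Num.min 1 (d / (N + 1))) => [|g g_near g_m].
  by rewrite lt_min ltr01 divr_gt0 // ltr_wpDl.
have g_le x : g x <= M.
  have := g_near x; rewrite lt_min => /andP[g_near1 _].
  by have := f_le x; have := ler_norm (f x); rewrite ltr_norml in g_near1; lra.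
have [p p_box p_defect] := Nle_bounded_defect x0 f M_ge1 g_le g_m.
suff : \sum_x `|g x - f x| < d by rewrite ltNge -p_defect d_min.
apply: (le_lt_trans (ler_sum _ (fun x _ => ltW (g_near x)))).
rewrite sumr_const -mulr_natl -/N.
apply: (@le_lt_trans _ _ (N * (d / (N + 1)))).
  by rewrite ler_wpM2l // ge_min lexx orbT.
by rewrite mulrA ltr_pdivrMr ?ltr_wpDl //; nra.
Qed.

End Closedness.

Hypothesis le_poset : forall j, is_poset (le j).

Definition up_ind (z : prodP) j (closed : bool) (y : T j) : R :=
  (le j (z j) y && (closed || (y != z j)))%:R.
Arguments up_ind : clear implicits.

Lemma up_ind_cone z j b : order_cone (le j) (up_ind z j b).
Proof.
have [_ le_anti le_trans'] := le_poset j.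
split=> [y | y y' yy']; first exact: ler0n.
rewrite /up_ind ler_nat; case/boolP: (le j (z j) y && _) => // /andP[zy zy_strict].
rewrite (le_trans' _ _ _ zy yy') lt0b /=; case: b zy_strict => //= y_neq_z.
apply: contra y_neq_z => /eqP y'_eq_z; apply/eqP/le_anti.
by rewrite zy -y'_eq_z yy'.
Qed.

Lemma up_indB z j y : up_ind z j true y - up_ind z j false y = (y == z j)%:R.
Proof.
have [le_refl _ _] := le_poset j.
by rewrite /up_ind; case: eqP => [->|_]; rewrite ?le_refl ?andbT ?andbF ?subrr ?subr0.
Qed.

Definition up_tensor (z : prodP) (b : {ffun 'I_k -> bool}) : tensor :=
  fun x => \prod_j up_ind z j (b j) (x j).

Definition sign (b : {ffun 'I_k -> bool}) : R := \prod_j (-1) ^+ ~~ b j.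

Lemma norm_sign b : `|sign b| = 1.
Proof. by rewrite normr_prod big1 // => j _; rewrite normrX normrN1 expr1n. Qed.

Lemma sum_sign_up_tensor z x : \sum_b sign b * up_tensor z b x = (x == z)%:R.
Proof.
under eq_bigr do rewrite -big_split /=.
rewrite -(bigA_distr_bigA (fun j b => (-1) ^+ (~~ b) * up_ind z j b (x j))) /=.
under eq_bigr do rewrite big_bool /= expr0 expr1 mul1r mulN1r up_indB.
have [->|x_neq_z] := eqVneq x z; first by rewrite big1 // => j _; rewrite eqxx.
have [j xj_neq_zj] : exists j, x j != z j.
  apply/existsP; apply: contraR x_neq_z => /existsPn xz.
  by apply/eqP/ffunP => j; apply/eqP/negPn.
by rewrite (bigD1 j) //= (negbTE xj_neq_zj) mul0r.
Qed.

Definition cone_center : tensor := fun x => \sum_z \sum_b up_tensor z b x.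

(* [h = \sum_z \sum_b (1 + c_z * sign b) * up_tensor z b] with
   [c_z = h z - cone_center z], and [|c_z| < 1] makes every coefficient nonnegative. *)
Lemma ND_cone_near_center h : (forall x, `|h x - cone_center x| < 1) -> ND_cone h.
Proof.
move=> h_near; pose c z := h z - cone_center z.
have -> : h = fun x => \sum_z \sum_b (1 + c z * sign b) * up_tensor z b x.
  apply: funext => x.
  under eq_bigr do under eq_bigr do rewrite mulrDl mul1r -mulrA.
  under eq_bigr do rewrite big_split /= -mulr_sumr sum_sign_up_tensor.
  rewrite big_split /= -/(cone_center x) (bigD1 x) //= eqxx mulr1 big1 ?addr0.
    by rewrite addrC subrK.
  by move=> z /negbTE; rewrite eq_sym => ->; rewrite mulr0.
apply: ND_cone_sum => z; apply: ND_cone_sum => b; exists 1%N.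
apply: Nle_scale; last exact: Nle_pure (fun j => up_ind_cone z j (b j)).
have : `|c z * sign b| < 1 by rewrite normrM norm_sign mulr1; exact: h_near.
by rewrite ltr_norml => /andP[? _]; lra.
Qed.

Lemma ND_cone_ball g n t : Nle n g -> 0 < t ->
  forall f, (forall x, `|f x - (g x + t * cone_center x)| < t) -> ND_cone f.
Proof.
move=> g_n t_gt0 f f_near.
have [n' h_n'] : ND_cone (fun x => (f x - g x) / t).
  apply: ND_cone_near_center => x.
  have -> : (f x - g x) / t - cone_center x = (f x - (g x + t * cone_center x)) / t.
    by field; rewrite gt_eqF.
  by rewrite normrM normfV (gtr0_norm t_gt0) ltr_pdivrMr // mul1r.
exists (n + n')%N; have -> : f = fun x => g x + t * ((f x - g x) / t).
  by apply: funext => x; rewrite mulrC divfK ?gt_eqF // addrC subrK.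
exact: Nle_add g_n (Nle_scale (ltW t_gt0) h_n').
Qed.

Lemma max_ND_rank_typical r : max_ND_rank R le r -> typical_ND_rank R le r.
Proof.
move=> r_max; have [[g g_r] _] := r_max.
case: r r_max g_r => [|r] r_max.
  by exists cone_center, 1; split=> // f /ND_cone_near_center/(ND_cone_max_rank r_max).
move=> [g_r not_g_r]; have [eps eps_gt0 g_far] := Nle_closed not_g_r.
pose S := \sum_x `|cone_center x|.
have S_ge0 : 0 <= S by rewrite sumr_ge0.
have center_le x : `|cone_center x| <= S by rewrite /S (bigD1 x) //= lerDl sumr_ge0.
pose t := eps / (S + 1).
have t_gt0 : 0 < t by rewrite divr_gt0 // ltr_wpDl.
exists (fun x => g x + t * cone_center x), t; split=> // f f_near; split.
  exact: ND_cone_max_rank r_max (ND_cone_ball g_r t_gt0 f_near).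
apply: g_far => x.
have t_eps : t * S + t = eps.
  by rewrite -[t in _ + t]mulr1 -mulrDr divfK // gt_eqF // ltr_wpDl.
have tE_le : `|t * cone_center x| <= t * S.
  by rewrite normrM gtr0_norm // ler_wpM2l // ltW.
have := ler_normD (f x - (g x + t * cone_center x)) (t * cone_center x).
have -> : f x - (g x + t * cone_center x) + t * cone_center x = f x - g x by ring.
by have := f_near x; lra.
Qed.

End ND_cone.

Lemma Nle_order0 (R : realType) (T : 'I_0 -> finType) (le : forall j, rel (T j))
    n (f : tensor R T) :
  Nle le n f <-> f = fun=> n%:R.
Proof.
have pure1 (F : 'I_n -> 'I_0 -> R) : \sum_i \prod_j F i j = n%:R.
  by under eq_bigr do rewrite big_ord0; rewrite sumr_const card_ord.
split=> [[v [_ f_def]] | ->]; first by apply: funext => x; rewrite f_def pure1.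
exists (fun _ _ _ => 0); split=> [_ j | x]; last by rewrite pure1.
by move: (ltn_ord j); rewrite ltn0.
Qed.

Lemma not_max_ND_rank_order0 (R : realType) (T : 'I_0 -> finType)
    (le : forall j, rel (T j)) r :
  ~ max_ND_rank R le r.
Proof.
pose x0 : prodP T := finfun (fun j => False_rect (T j) (notF (ltn_ord j))).
move=> [_ rank_le_r]; have /negbT/negP[] := ltnn r; apply: rank_le_r.
exists (fun=> r.+1%:R); split; first exact/Nle_order0.
move=> /Nle_order0 /(congr1 (fun f => f x0)) /eqP.
by rewrite eqr_nat (gtn_eqF (ltnSn r)).
Qed.

Theorem theorem10 (R : realType) (k : nat) (T : 'I_k -> finType)
  (le : forall j, rel (T j)) (Hposet : forall j, is_poset (le j)) (r : nat) :
  max_ND_rank R le r -> typical_ND_rank R le r.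
Proof.
have [k0 | k_gt0] := posnP k; last exact: max_ND_rank_typical.
by subst k => /not_max_ND_rank_order0.
Qed.
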